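(* Let $d\geq 2$, $a\in[1/2,1]$, $\kappa\in[1/4,3/4]$ and $\delta>0$. Define for $k\in\mathbb{N}$ the points $x^{k,\delta}\in\mathbb{R}^{d}$ by $x^{k,\delta}=(a(k+1-\kappa)^{-1},0,\dots,0)$ if $k$ is odd and $x^{k,\delta}=(a(k+1-\kappa)^{-1},\delta,0,\dots,0)$ if $k$ is even, and let $f_a:\mathbb{R}^{d}\to\{0,1\}$ be $f_a(x)=1$ if $\lceil a/x_1\rceil$ is an odd integer and $f_a(x)=0$ otherwise. Fix neural network dimensions $\mathbf{N}=(N_L=1,N_{L-1},\dots,N_1,N_0=d)$ with $L\geq 2$. Then there exists $\tilde\varphi\in\mathcal{NN}_{\mathbf{N},L}$ with $\tilde\varphi(x^{k,\delta})=f_a(x^{k,\delta})$ for all $k\in\mathbb{N}$.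
   Context: $\mathcal{NN}_{\mathbf{N},L}$ is the set of maps $\varphi=W^L\rho W^{L-1}\rho\cdots\rho W^1:\mathbb{R}^d\to\mathbb{R}$ where each $W^\ell:\mathbb{R}^{N_{\ell-1}}\to\mathbb{R}^{N_\ell}$ is affine and $\rho(t)=\max\{0,t\}$ is applied coordinatewise. *)

From HB Require Import structures.
From mathcomp Require Import all_boot all_order all_algebra.
From mathcomp Require Import reals.
Set Implicit Arguments. Unset Strict Implicit. Unset Printing Implicit Defensive.
Import Order.TTheory GRing.Theory Num.Theory.
Local Open Scope ring_scope.

Section NN.
Variable R : realType.

Definition relu (t : R) : R := Num.max 0 t.

(* a vector x in R^d seen as a nat-indexed family (zero outside 0..d-1) *)
Definition vfun (d : nat) (x : 'rV[R]_d) (j : nat) : R :=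
  odflt 0 (omap (fun k : 'I_d => x ord0 k) (insub j)).

(* Layer l (1 <= l <= L) is the affine
   map W^l : R^(N (l-1)) -> R^(N l),
     (W^l z)_i = \sum_(j < N (l-1)) A l i j * z_j + b l i   (i < N l).
   layer_out N A b L l x = output of the l-th layer (after ReLU for l < L). *)
Fixpoint layer_out (N : nat -> nat) (A : nat -> nat -> nat -> R)
  (b : nat -> nat -> R) (L : nat) (l : nat) (x : nat -> R) : nat -> R :=
  match l with
  | 0 => x
  | l'.+1 =>
      let z := layer_out N A b L l' x in
      let y := fun i => \sum_(j < N l') A l i j * z j + b l i in
      if l == L then y else (fun i => relu (y i))
  end.

(* realization W^L rho W^(L-1) rho ... rho W^1 : R^d -> R, d = N 0 *)
Definition realize (d : nat) (N : nat -> nat) (A : nat -> nat -> nat -> R)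
  (b : nat -> nat -> R) (L : nat) : 'rV[R]_d -> R :=
  fun x => layer_out N A b L L (vfun x) 0.

Definition in_NN (d : nat) (N : nat -> nat) (L : nat) (phi : 'rV[R]_d -> R) : Prop :=
  exists (A : nat -> nat -> nat -> R) (b : nat -> nat -> R),
    forall x, phi x = realize N A b L x.

Definition xpt (d : nat) (a kappa delta : R) (k : nat) : 'rV[R]_d :=
  \row_(i < d) (if (i == 0 :> nat) then a / (k.+1%:R - kappa)
                else if (i == 1 :> nat) && ~~ odd k then delta else 0).

Definition fa (d : nat) (a : R) (x : 'rV[R]_d) : R :=
  if odd `|Num.ceil (a / vfun x 0)|%N then 1 else 0.

End NN.

(* At the points x^{k,delta} we have a / x_1 = k + 1 - kappa, whose ceiling is
   k + 1 since 0 <= kappa < 1, so f_a is 1 at even k and 0 at odd k; this is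
   exactly x_2 / delta. So it suffices to realize x |-> delta^-1 * relu(x_2),
   which any ReLU network of depth >= 2 with nonzero widths does: the first
   layer copies x_2 into neuron 0, the hidden layers pass neuron 0 on (relu is
   idempotent), and the output layer scales it. The paper's x_1, x_2 are the
   coordinates 0 and 1 of [vfun]. *)
From HB Require Import structures.
From mathcomp Require Import all_boot all_order all_algebra.
From mathcomp Require Import reals.
From mathcomp Require Import lra.
Import Order.TTheory GRing.Theory Num.Theory.
Local Open Scope ring_scope.

Lemma sum_ord_delta_mul (R : pzSemiRingType) (n c : nat) (v : R) (z : nat -> R) :
  (c < n)%N -> \sum_(j < n) (if (j : nat) == c then v else 0) * z j = v * z c.
Proof.
move=> ltcn; rewrite (bigD1 (Ordinal ltcn)) //= eqxx big1 ?addr0 // => j.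
by rewrite -val_eqE /= => /negbTE ->; rewrite mul0r.
Qed.

Lemma layer_outS (R : realType) N A b L l (x : nat -> R) i :
  layer_out N A b L l.+1 x i
  = (if l.+1 == L then id else @relu R)
      (\sum_(j < N l) A l.+1 i j * layer_out N A b L l x j + b l.+1 i).
Proof. by rewrite /=; case: eqP. Qed.

Section ReluCoordinate.
Variable R : realType.

Lemma relu_id (t : R) : relu (relu t) = relu t.
Proof. by rewrite /relu maxA maxxx. Qed.

Lemma relu_ge0 (t : R) : 0 <= t -> relu t = t.
Proof. by move=> t_ge0; rewrite /relu max_r. Qed.

Definition relu_coord_weights (L c : nat) (s : R) : nat -> nat -> nat -> R :=
  fun l i j => if (i == 0%N) && (j == if l == 1%N then c else 0%N)
               then (if l == L then s else 1) else 0.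

Definition zero_biases : nat -> nat -> R := fun _ _ => 0.

Variables (N : nat -> nat) (L c : nat) (s : R).
Hypothesis ltL1 : (1 < L)%N.
Hypothesis ltc_N0 : (c < N 0)%N.
Hypothesis N_gt0 : forall l, (l < L)%N -> (0 < N l)%N.

Lemma layer_out_relu_coord (x : nat -> R) l : (0 < l <= L)%N ->
  layer_out N (relu_coord_weights L c s) zero_biases L l x 0%N
  = (if l == L then s else 1) * relu (x c).
Proof.
elim: l => [//|l IHl] /andP[_ ltlL].
rewrite layer_outS /zero_biases addr0.
under eq_bigr do rewrite {1}/relu_coord_weights eqxx andTb.
case: l IHl ltlL => [|l] IHl ltlL.
  by rewrite (ltn_eqF ltL1) sum_ord_delta_mul // !mul1r.
rewrite sum_ord_delta_mul ?N_gt0 // IHl ?(ltnW ltlL) // (ltn_eqF ltlL).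
by case: (l.+2 == L); rewrite /= !mul1r ?relu_id.
Qed.

Lemma realize_relu_coord d (x : 'rV[R]_d) :
  realize N (relu_coord_weights L c s) zero_biases L x = s * relu (vfun x c).
Proof. by rewrite /realize layer_out_relu_coord ?eqxx ?leqnn ?(ltnW ltL1). Qed.

Lemma relu_coord_in_NN d : in_NN N L (fun x : 'rV[R]_d => s * relu (vfun x c)).
Proof.
by exists (relu_coord_weights L c s), zero_biases => x; rewrite realize_relu_coord.
Qed.

End ReluCoordinate.

Lemma vfun_ord {R : realType} {d} (x : 'rV[R]_d) {j} (ltjd : (j < d)%N) :
  vfun x j = x 0 (Ordinal ltjd).
Proof. by rewrite /vfun insubT. Qed.

Lemma ceil_natB (R : realType) (n : nat) (t : R) :
  0 <= t < 1 -> Num.ceil (n%:R - t) = n%:Z.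
Proof.
move=> /andP[t_ge0 t_lt1]; apply: ceil_def.
rewrite rmorphB /=; apply/andP; split; lra.
Qed.

Section Points.
Variables (R : realType) (d : nat) (a kappa delta : R).

Lemma vfun_xpt0 k : (0 < d)%N ->
  vfun (xpt d a kappa delta k) 0%N = a / (k.+1%:R - kappa).
Proof. by move=> d_gt0; rewrite (vfun_ord _ d_gt0) mxE. Qed.

Lemma vfun_xpt1 k : (1 < d)%N ->
  vfun (xpt d a kappa delta k) 1%N = if odd k then 0 else delta.
Proof. by move=> d_gt1; rewrite (vfun_ord _ d_gt1) mxE; case: odd. Qed.

Lemma fa_xpt k : (0 < d)%N -> a != 0 -> 0 <= kappa < 1 ->
  fa a (xpt d a kappa delta k) = if odd k then 0 else 1.
Proof.
move=> d_gt0 a_neq0 kappa01.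
by rewrite /fa vfun_xpt0 // divKf // ceil_natB //=; case: odd.
Qed.

End Points.

Theorem lemma5p3 (R : realType) (d : nat) (a kappa delta : R)
  (N : nat -> nat) (L : nat) :
  (2 <= d)%N ->
  1/2 <= a <= 1 ->
  1/4 <= kappa <= 3/4 ->
  0 < delta ->
  (2 <= L)%N ->
  N 0%N = d -> N L = 1%N -> (forall l, (l <= L)%N -> (0 < N l)%N) ->
  exists phi : 'rV[R]_d -> R,
    in_NN N L phi /\
    forall k : nat, phi (xpt d a kappa delta k) = fa a (xpt d a kappa delta k).
Proof.
move=> d_gt1 /andP[a_ge a_le] /andP[kappa_ge kappa_le] delta_gt0 L_gt1 N0 _ N_gt0.
exists (fun x => delta^-1 * relu (vfun x 1%N)); split.
  by apply: relu_coord_in_NN; rewrite ?N0 // => l /ltnW/N_gt0.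
have a_neq0 : a != 0 by apply/eqP; lra.
have kappa01 : 0 <= kappa < 1 by apply/andP; split; lra.
move=> k; rewrite vfun_xpt1 // fa_xpt ?(ltnW d_gt1) //.
case: odd; first by rewrite relu_ge0 // mulr0.
by rewrite relu_ge0 ?(ltW delta_gt0) // mulVf ?gt_eqF.
Qed.
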